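(* Let $A\subset\mathbb{Z}^n$ be a finite set with $0\in A$, let $c_\alpha\in\mathbb{C}^*$ for $\alpha\in A$, and let $\rho:A\to\mathbb{R}$ be the restriction to $A$ of a convex piecewise linear function $\hat\rho$ on $\mathrm{Conv}(A)$ whose maximal domains of linearity define a polyhedral decomposition $\mathcal{P}$ of $\mathrm{Conv}(A)$ with vertex set exactly $A$, all of whose cells are congruent under $GL(n,\mathbb{Z})$ to standard simplices. For $\tau>0$ consider the Laurent polynomial $$f(x_1,\dots,x_n)=\sum_{\alpha\in A}c_\alpha\tau^{\rho(\alpha)}x_1^{\alpha_1}\cdots x_n^{\alpha_n},$$ normalized so that its constant term $c_0\tau^{\rho(0)}$ equals $1$. Assume that $0$ is a vertex of every maximal cell of $\mathcal{P}$. Then, for $\tau$ sufficiently small, all the critical points of $f$ on $(\mathbb{C}^* )^n$ lie in $\mathcal{U}_0$, and the critical values of $f$ converge to $1$ as $\tau\to 0$.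
   Context: The tropicalization of $f$ is $\varphi(\xi)=\max\{\langle\alpha,\xi\rangle-\rho(\alpha)\,|\,\alpha\in A\}$ for $\xi\in\mathbb{R}^n$; $\Gamma\subset\mathbb{R}^n$ is the tropical hypersurface where this maximum is not achieved uniquely, and $\Delta_0$ is the component of $\mathbb{R}^n\setminus\Gamma$ on which the maximum is achieved by $\alpha=0$. The logarithm map is $\mathrm{Log}(x_1,\dots,x_n)=\frac{1}{|\log\tau|}(\log|x_1|,\dots,\log|x_n|)$, and $\mathcal{U}_0=\mathrm{Log}^{-1}(\Delta_0)\subset(\mathbb{C}^* )^n$ is the region where the constant term of $f$ dominates all other monomials of $f$. *)

From HB Require Import structures.
From mathcomp Require Import all_boot all_order all_algebra.
From mathcomp Require Import finmap.
From mathcomp Require Import reals exp.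
From mathcomp Require Export complex.

Set Implicit Arguments.
Unset Strict Implicit.
Unset Printing Implicit Defensive.

Import Order.TTheory GRing.Theory Num.Theory.
Local Open Scope ring_scope.


Section Defs.
Variable R : realType.
Variable n : nat.

Definition lat (a : 'rV[int]_n) : 'rV[R]_n := map_mx (fun z : int => z%:~R) a.

Definition pairing (a : 'rV[int]_n) (xi : 'rV[R]_n) : R :=
  \sum_(j < n) (a ord0 j)%:~R * xi ord0 j.

Definition dotR (m xi : 'rV[R]_n) : R := \sum_(j < n) m ord0 j * xi ord0 j.

Definition conv (S : {fset 'rV[int]_n}) (xi : 'rV[R]_n) : Prop :=
  exists lam : 'rV[int]_n -> R,
    (forall a, a \in S -> 0 <= lam a) /\
    \sum_(a <- S) lam a = 1 /\
    xi = \sum_(a <- S) lam a *: lat a.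

Definition convex_set (D : 'rV[R]_n -> Prop) : Prop :=
  forall x y t, D x -> D y -> 0 <= t <= 1 -> D (t *: x + (1 - t) *: y).

Definition convex_fun_on (D : 'rV[R]_n -> Prop) (g : 'rV[R]_n -> R) : Prop :=
  forall x y t, D x -> D y -> 0 <= t <= 1 ->
    g (t *: x + (1 - t) *: y) <= t * g x + (1 - t) * g y.

Definition affine_on (D : 'rV[R]_n -> Prop) (g : 'rV[R]_n -> R) : Prop :=
  exists (m : 'rV[R]_n) (b : R), forall xi, D xi -> g xi = dotR m xi + b.

(* sigma is the vertex set of a simplex congruent under (affine) GL(n,Z) to the
   standard simplex conv(0, e_1, ..., e_n): sigma = t + {0, e_1, ..., e_n} M *)
Definition unimodular_simplex (sigma : {fset 'rV[int]_n}) : Prop :=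
  exists (M : 'M[int]_n) (t : 'rV[int]_n),
    M \in unitmx /\
    forall v, (v \in sigma) = (v == t) || [exists i : 'I_n, v == t + row i M].

(* [cells] is the list of (vertex sets of the) maximal cells of the polyhedral
   decomposition P of Conv(A) given by the maximal domains of linearity of a
   convex piecewise linear function rhohat on Conv(A) with rhohat|_A = rho;
   the vertex set of P is exactly A and all cells are unimodular simplices. *)
Definition unimodular_regular_decomposition (A : {fset 'rV[int]_n})
    (rho : 'rV[int]_n -> R) (cells : seq {fset 'rV[int]_n}) : Prop :=
  exists rhohat : 'rV[R]_n -> R,
    [/\ convex_fun_on (conv A) rhohat,
        (forall a, a \in A -> rhohat (lat a) = rho a),
        (forall sigma, sigma \in cells ->
           [/\ (sigma `<=` A)%fset,
               unimodular_simplex sigma,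
               affine_on (conv sigma) rhohat &
               (* maximality of the domain of linearity *)
               forall D : 'rV[R]_n -> Prop,
                 convex_set D ->
                 (forall xi, conv sigma xi -> D xi) ->
                 (forall xi, D xi -> conv A xi) ->
                 affine_on D rhohat ->
                 forall xi, D xi -> conv sigma xi]),
        (forall xi, conv A xi <-> exists2 sigma, sigma \in cells & conv sigma xi) &
        (forall a, a \in A <-> exists2 sigma, sigma \in cells & a \in sigma)].

Definition monom (a : 'rV[int]_n) (x : 'rV[R[i]]_n) : R[i] :=
  \prod_(j < n) (x ord0 j) ^ (a ord0 j).

Definition laurent (A : {fset 'rV[int]_n}) (c : 'rV[int]_n -> R[i])
    (rho : 'rV[int]_n -> R) (tau : R) (x : 'rV[R[i]]_n) : R[i] :=
  \sum_(a <- A) c a * ((powR tau (rho a))%:C)%C * monom a x.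

Definition laurent_partial (A : {fset 'rV[int]_n}) (c : 'rV[int]_n -> R[i])
    (rho : 'rV[int]_n -> R) (tau : R) (j : 'I_n) (x : 'rV[R[i]]_n) : R[i] :=
  \sum_(a <- A) c a * ((powR tau (rho a))%:C)%C * (a ord0 j)%:~R *
     \prod_(k < n) (x ord0 k) ^ (a ord0 k - (k == j)%:Z).

Definition critical_point (A : {fset 'rV[int]_n}) (c : 'rV[int]_n -> R[i])
    (rho : 'rV[int]_n -> R) (tau : R) (x : 'rV[R[i]]_n) : Prop :=
  (forall j, x ord0 j != 0) /\ (forall j, laurent_partial A c rho tau j x = 0).

Definition Logmap (tau : R) (x : 'rV[R[i]]_n) : 'rV[R]_n :=
  \row_(j < n) (ln (Normc.normc (x ord0 j)) / `|ln tau|).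

(* Delta_0: the region where the maximum in the tropicalization
   phi(xi) = max_{alpha in A} (<alpha,xi> - rho(alpha)) is achieved (uniquely)
   by alpha = 0. *)
Definition in_Delta0 (A : {fset 'rV[int]_n}) (rho : 'rV[int]_n -> R)
    (xi : 'rV[R]_n) : Prop :=
  forall a, a \in A -> a != 0 -> pairing a xi - rho a < pairing 0 xi - rho 0.

Definition in_U0 (A : {fset 'rV[int]_n}) (rho : 'rV[int]_n -> R) (tau : R)
    (x : 'rV[R[i]]_n) : Prop :=
  (forall j, x ord0 j != 0) /\ in_Delta0 A rho (Logmap tau x).

End Defs.

From Pilot Require Import Defs.
From mathcomp Require Import all_boot all_order all_algebra.
From mathcomp Require Import finmap.
From mathcomp Require Import reals exp.
From mathcomp Require Import complex.
From mathcomp Require Import lra ring sequences.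

Set Implicit Arguments.
Unset Strict Implicit.
Unset Printing Implicit Defensive.

Import Order.TTheory GRing.Theory Num.Theory Normc.
Local Open Scope ring_scope.

(* At a critical point x, Euler's identities give sum_a w_a <a, g> = 0 for
   every g, where the terms w_a = c_a tau^rho(a) x^a of f have modulus
   |c_a| exp(|log tau| (<a, xi> - rho(a))) with xi = Log x. Convexity of rhohat
   and maximality of its domains of linearity show that, at any xi, the
   lattice points whose tropical monomial <a, xi> - rho(a) is within a fixed
   delta > 0 of the maximum all lie in one cell sigma. Since sigma is a
   unimodular simplex containing 0, every vertex b <> 0 of sigma has a g with
   <., g> the indicator of b on sigma; the relation then bounds |w_b| by a
   constant times the terms off sigma, i.e. by O(tau^delta) times the largest
   term. So no a <> 0 can maximize the tropical monomial (x lies in U_0), and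
   then every w_a with a <> 0 is O(tau^delta), whence f(x) = 1 + O(tau^delta). *)

Section UniformOverSeq.
Variable R : realDomainType.

Lemma uniform_pos_seq (T : eqType) (s : seq T) (P : T -> R -> Prop) :
  (forall x e e', P x e -> 0 < e' <= e -> P x e') ->
  (forall x, x \in s -> exists2 e, 0 < e & P x e) ->
  exists2 e, 0 < e & forall x, x \in s -> P x e.
Proof.
move=> Pmon; elim: s => [|x s IH] H; first by exists 1.
have [e1 e10 Pe1] := H x (mem_head _ _).
have [e2 e20 Pe2] := IH (fun y ys => H y (ltac:(by rewrite in_cons ys orbT))).
exists (Num.min e1 e2); first by rewrite lt_min e10 e20.
move=> y; rewrite in_cons => /orP[/eqP ->|ys].
  by apply: Pmon Pe1 _; rewrite lt_min e10 e20 ge_min lexx.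
by apply: Pmon (Pe2 _ ys) _; rewrite lt_min e10 e20 ge_min lexx orbT.
Qed.

Lemma uniform_ub_seq (T : eqType) (s : seq T) (P : T -> R -> Prop) :
  (forall x e e', P x e -> e <= e' -> P x e') ->
  (forall x, x \in s -> exists e, P x e) ->
  exists e, forall x, x \in s -> P x e.
Proof.
move=> Pmon; elim: s => [|x s IH] H; first by exists 0.
have [e1 Pe1] := H x (mem_head _ _).
have [e2 Pe2] := IH (fun y ys => H y (ltac:(by rewrite in_cons ys orbT))).
exists (Num.max e1 e2) => y; rewrite in_cons => /orP[/eqP ->|ys].
  by apply: Pmon Pe1 _; rewrite le_max lexx.
by apply: Pmon (Pe2 _ ys) _; rewrite le_max lexx orbT.
Qed.

Lemma exists_argmax_seq (T : eqType) (s : seq T) (f : T -> R) x : x \in s ->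
  exists2 y, y \in s & forall z, z \in s -> f z <= f y.
Proof.
elim: s x => [//|y s IH] x _.
case: s IH => [|u s] IH.
  by exists y; [exact: mem_head | move=> z; rewrite in_cons in_nil orbF => /eqP ->].
have [w ws Hw] := IH u (mem_head u s).
case: (lerP (f y) (f w)) => hyw.
  exists w; first by rewrite in_cons ws orbT.
  by move=> z; rewrite in_cons => /orP[/eqP ->|/Hw].
exists y; first exact: mem_head.
by move=> z; rewrite in_cons => /orP[/eqP ->|/Hw /le_trans]; [|apply; apply: ltW].
Qed.

End UniformOverSeq.

Lemma lattice_std_simplex (n : nat) (nu : 'rV[int]_n) :
  (forall i, 0 <= nu 0 i) -> \sum_i nu 0 i <= 1 ->
  nu = 0 \/ exists j, nu = delta_mx 0 j.
Proof.
move=> nu0 nu1; have [s0|s0] := eqVneq (\sum_i nu 0 i) 0.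
  by left; apply/rowP => i; rewrite mxE (psumr_eq0P (fun j _ => nu0 j) s0).
right; have [j nj] : exists j, nu 0 j != 0.
  apply/existsP; apply: contraT; rewrite negb_exists => /forallP nu_eq0.
  by move: s0; rewrite big1 ?eqxx // => i _; apply/eqP; move: (nu_eq0 i); rewrite negbK.
have nuj1 : nu 0 j = 1.
  apply/eqP; rewrite eq_le -gtz0_ge1 lt_def nj nu0 !andbT.
  by apply: le_trans nu1; rewrite (bigD1 j) //= lerDl sumr_ge0.
have rest : \sum_(i | i != j) nu 0 i = 0.
  apply/eqP; rewrite eq_le sumr_ge0 // andbT.
  by move: nu1; rewrite (bigD1 j) //= nuj1 -lerBrDl subrr.
exists j; apply/rowP => i; rewrite [RHS]mxE /=; case: (eqVneq i j) => [->|ij].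
  by rewrite nuj1 ?eqxx.
exact: (psumr_eq0P (fun j _ => nu0 j) rest).
Qed.

Section LatticeGeometry.
Variables (R : realType) (n : nat).
Local Notation lat := (@lat R n).
Local Notation dotR := (@dotR R n).
Local Notation conv := (@conv R n).

Lemma latD (a b : 'rV[int]_n) : lat (a + b) = lat a + lat b.
Proof. by apply/rowP => j; rewrite !mxE mulrzDr. Qed.

Lemma latB (a b : 'rV[int]_n) : lat (a - b) = lat a - lat b.
Proof. by apply/rowP => j; rewrite !mxE mulrzBr. Qed.

Lemma lat0 : lat 0 = 0.
Proof. by apply/rowP => j; rewrite !mxE. Qed.

Lemma pairingE (a : 'rV[int]_n) xi : pairing a xi = dotR (lat a) xi.
Proof. by rewrite /pairing /Defs.dotR; apply: eq_bigr => j _; rewrite mxE. Qed.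

Lemma dotR_mx (u v : 'rV[R]_n) : dotR u v = (u *m v^T) 0 0.
Proof. by rewrite /Defs.dotR mxE; apply: eq_bigr => j _; rewrite mxE. Qed.

Lemma dotRC u w : dotR u w = dotR w u.
Proof. by rewrite /Defs.dotR; apply: eq_bigr => j _; rewrite mulrC. Qed.

Lemma dotRDl u v w : dotR (u + v) w = dotR u w + dotR v w.
Proof. by rewrite !dotR_mx mulmxDl mxE. Qed.

Lemma dotRZl k u w : dotR (k *: u) w = k * dotR u w.
Proof. by rewrite !dotR_mx -scalemxAl mxE. Qed.

Lemma dotR0l w : dotR 0 w = 0.
Proof. by rewrite dotR_mx mul0mx mxE. Qed.

Lemma dotR_suml (I : Type) (s : seq I) (P : pred I) (F : I -> 'rV[R]_n) w :
  dotR (\sum_(i <- s | P i) F i) w = \sum_(i <- s | P i) dotR (F i) w.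
Proof.
rewrite dotR_mx mulmx_suml summxE; apply: eq_bigr => i _.
by rewrite dotR_mx.
Qed.

Lemma dotRDr u v w : dotR w (u + v) = dotR w u + dotR w v.
Proof. by rewrite !(dotRC w) dotRDl. Qed.

Lemma dotRZr k u w : dotR w (k *: u) = k * dotR w u.
Proof. by rewrite !(dotRC w) dotRZl. Qed.

Lemma dotRBr u v w : dotR w (u - v) = dotR w u - dotR w v.
Proof. by rewrite dotRDr -scaleN1r dotRZr mulN1r. Qed.

Lemma sum_fset_delta (T : choiceType) (V : lmodType R) (S : {fset T}) (c : T)
   (F : T -> V) : c \in S -> \sum_(b <- S) (b == c)%:R *: F b = F c.
Proof.
move=> cS; rewrite (big_rem c) //= eqxx scale1r big1_seq ?addr0 //.
move=> b /andP[_]; rewrite mem_rem_uniq ?fset_uniq // => /andP[/= bc _].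
by rewrite (negbTE bc) scale0r.
Qed.

Lemma sum_fset_deltaR (T : choiceType) (S : {fset T}) (c : T) (F : T -> R) :
  c \in S -> \sum_(b <- S) (b == c)%:R * F b = F c.
Proof. exact: (@sum_fset_delta _ R^o). Qed.

Lemma conv_lat (S : {fset 'rV[int]_n}) a : a \in S -> conv S (lat a).
Proof.
move=> aS; exists (fun b => (b == a)%:R); split; first by move=> b _; rewrite ler0n.
split; last by rewrite sum_fset_delta.
by rewrite -[RHS](sum_fset_deltaR (fun=> 1) aS); apply: eq_bigr => b _; rewrite mulr1.
Qed.

Lemma conv_convex (S : {fset 'rV[int]_n}) : convex_set (conv S).
Proof.
move=> x y t [lx [lx0 [lx1 ->]]] [ly [ly0 [ly1 ->]]] /andP[t0 t1].
exists (fun a => t * lx a + (1 - t) * ly a); split.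
  move=> a aS; apply: addr_ge0; apply: mulr_ge0 => //;
    [exact: lx0 | by rewrite subr_ge0 | exact: ly0].
split; first by rewrite big_split /= -!mulr_sumr lx1 ly1 !mulr1 addrC subrK.
rewrite !scaler_sumr -big_split /=; apply: eq_bigr => a _.
by rewrite !scalerA [RHS]scalerDl.
Qed.

Lemma conv_dotR_le (S : {fset 'rV[int]_n}) (u : 'rV[R]_n) (beta M : R) q :
  conv S q -> (forall a, a \in S -> dotR (lat a) u + beta <= M) ->
  dotR q u + beta <= M.
Proof.
case=> lam [l0 [l1 ->]] hS.
rewrite dotR_suml -[beta]mul1r -[M]mul1r -l1 !mulr_suml -big_split /=.
rewrite big_seq [X in _ <= X]big_seq; apply: ler_sum => a aS.
by rewrite dotRZl -mulrDr; apply: ler_wpM2l; [exact: l0 | exact: hS].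
Qed.

Lemma conv_barycenter (S : {fset 'rV[int]_n}) (P : pred 'rV[int]_n) :
  let k := \sum_(a <- S | P a) (1 : R) in
  0 < k -> conv S (k^-1 *: \sum_(a <- S | P a) lat a).
Proof.
move=> k k0; exists (fun a => if P a then k^-1 else 0); split.
  by move=> a _; case: ifP => // _; rewrite invr_ge0 ltW.
split.
  by rewrite -big_mkcond /= -[RHS](mulVf (lt0r_neq0 k0)) mulr_sumr mulr1.
rewrite scaler_sumr big_mkcond /=; apply: eq_bigr => a _.
by case: ifP; rewrite ?scale0r.
Qed.

Section UnimodularSimplex.
Variables (sg : {fset 'rV[int]_n}) (M : 'M[int]_n) (t : 'rV[int]_n).
Hypothesis M_unit : M \in unitmx.
Hypothesis sgE : forall v, (v \in sg) = (v == t) || [exists i, v == t + row i M].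
Local Notation MR := (map_mx (fun z : int => z%:~R : R) M).

Lemma MR_unit : MR \in unitmx.
Proof. by rewrite unitmxE (det_map_mx intr) rmorph_unit // -unitmxE. Qed.

Lemma lat_row i : lat (row i M) = row i MR.
Proof. by rewrite /Defs.lat map_row. Qed.

Lemma row_neq0 i : row i M != 0.
Proof.
apply/negP => /eqP; rewrite rowE => /(congr1 (fun A => A *m invmx M)).
rewrite mulmxK // mul0mx => /(congr1 (fun A : 'M[int]_(1, n) => A 0 i)).
by rewrite !mxE !eqxx mulr1n => /eqP; rewrite oner_eq0.
Qed.

Lemma row_inj : injective (fun i => row i M).
Proof.
move=> i j; rewrite !rowE => /(congr1 (fun A => A *m invmx M)); rewrite !mulmxK //.
move/(congr1 (fun A : 'M[int]_(1, n) => A 0 i)); rewrite !mxE !eqxx /=.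
by case: (i =P j) => // _ /eqP; rewrite mulr0n oner_eq0.
Qed.

Lemma vertex_eq_base i : (t == t + row i M) = false.
Proof. by rewrite -subr_eq0 opprD addNKr oppr_eq0 (negbTE (row_neq0 i)). Qed.

Lemma vertex_eq i j : (t + row j M == t + row i M) = (i == j).
Proof. by rewrite (inj_eq (addrI t)); apply/eqP/eqP => [/row_inj | ->]. Qed.

Lemma base_in : t \in sg.
Proof. by rewrite sgE eqxx. Qed.

Lemma vertex_in i : t + row i M \in sg.
Proof. by rewrite sgE; apply/orP; right; apply/existsP; exists i. Qed.

Lemma lat_vertex b : b \in sg ->
  lat b = lat t + \sum_i (b == t + row i M)%:R *: row i MR /\
  \sum_i ((b == t + row i M)%:R : R) <= 1.
Proof.
rewrite sgE => /orP[/eqP ->|/existsP[j /eqP ->]].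
  split; last by rewrite big1 ?ler01 // => i _; rewrite vertex_eq_base.
  by rewrite big1 ?addr0 // => i _; rewrite vertex_eq_base scale0r.
split.
  rewrite latD lat_row (bigD1 j) //= vertex_eq eqxx scale1r big1 ?addr0 //.
  by move=> i /negbTE ij; rewrite vertex_eq ij scale0r.
rewrite (bigD1 j) //= vertex_eq eqxx big1 ?addr0 //.
by move=> i /negbTE ij; rewrite vertex_eq ij.
Qed.

Lemma conv_unimodularP q : conv sg q <-> exists mu : 'rV[R]_n,
  [/\ (forall i, 0 <= mu 0 i), \sum_i mu 0 i <= 1 & q = lat t + mu *m MR].
Proof.
split.
  case=> lam [l0 [l1 ->]].
  exists (\row_i \sum_(b <- sg) lam b * (b == t + row i M)%:R); split.
  - move=> i; rewrite mxE big_seq; apply: sumr_ge0 => b bs.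
    by apply: mulr_ge0; [exact: l0 | exact: ler0n].
  - under eq_bigr do rewrite mxE.
    rewrite exchange_big /= -[X in _ <= X]l1 big_seq [X in _ <= X]big_seq.
    apply: ler_sum => b bs; rewrite -mulr_sumr; apply: ler_piMr; first exact: l0.
    exact: (lat_vertex bs).2.
  - rewrite big_seq (eq_bigr (fun b => lam b *: (lat t +
        \sum_i (b == t + row i M)%:R *: row i MR))); last first.
      by move=> b bs; rewrite -(lat_vertex bs).1.
    rewrite -big_seq mulmx_sum_row; under [X in _ = _ + X]eq_bigr do rewrite mxE.
    under eq_bigr do rewrite scalerDr scaler_sumr.
    rewrite big_split /= -scaler_suml l1 scale1r exchange_big /=; congr (_ + _).
    by apply: eq_bigr => i _; rewrite scaler_suml; under eq_bigr do rewrite scalerA.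
case=> mu [mu0 mu1 ->].
exists (fun b => (b == t)%:R * (1 - \sum_i mu 0 i) +
                 \sum_i (b == t + row i M)%:R * mu 0 i).
split.
  move=> b _; apply: addr_ge0; first by apply: mulr_ge0; rewrite ?ler0n ?subr_ge0.
  by apply: sumr_ge0 => i _; apply: mulr_ge0.
split.
  rewrite big_split /= sum_fset_deltaR ?base_in // exchange_big /=.
  under [X in _ + X]eq_bigr do rewrite sum_fset_deltaR ?vertex_in //.
  by rewrite subrK.
rewrite (eq_bigr (fun b => (b == t)%:R *: ((1 - \sum_i mu 0 i) *: lat b) +
    \sum_i (b == t + row i M)%:R *: (mu 0 i *: lat b))); last first.
  move=> b _; rewrite [LHS]scalerDl [in LHS]scaler_suml -scalerA; congr (_ + _).
  by apply: eq_bigr => i _; rewrite scalerA.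
rewrite big_split /= sum_fset_delta ?base_in // exchange_big /=.
under [X in _ = _ + X]eq_bigr do rewrite sum_fset_delta ?vertex_in //.
rewrite scalerBl scale1r -addrA; congr (_ + _).
rewrite scaler_suml -sumrN -big_split /= mulmx_sum_row; apply: eq_bigr => i _.
by rewrite latD lat_row scalerDr addKr.
Qed.

Lemma unimodular_conv_lat a : conv sg (lat a) -> a \in sg.
Proof.
case/conv_unimodularP => mu [mu0 mu1 Ea].
pose nu := (a - t) *m invmx M.
have anu : a - t = nu *m M by rewrite /nu mulmxKV.
have munu : mu = lat nu.
  have : mu *m MR = lat nu *m MR.
    have -> : lat nu *m MR = lat (a - t).
      by rewrite anu /Defs.lat -map_mxM.
    by rewrite latB Ea addrC addKr.
  by move/(congr1 (fun X => X *m invmx MR)); rewrite !mulmxK // MR_unit.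
have nu0 i : 0 <= nu 0 i by move: (mu0 i); rewrite munu mxE ler0z.
have nu1 : \sum_i nu 0 i <= 1.
  move: mu1; rewrite munu; under eq_bigr do rewrite mxE.
  by rewrite -(rmorph_sum intr) /= -[X in _ <= X]/(1%:~R) ler_int.
case: (lattice_std_simplex nu0 nu1) => [nuE | [j nuE]]; move: anu; rewrite nuE.
  by rewrite mul0mx => /eqP; rewrite subr_eq0 => /eqP ->; exact: base_in.
by rewrite -rowE => /eqP; rewrite subr_eq addrC => /eqP ->; exact: vertex_in.
Qed.

Lemma unimodular_internal_point : exists2 q0, conv sg q0 &
  forall p, exists2 s, 0 < s <= 1 & conv sg (s *: p + (1 - s) *: q0).
Proof.
pose c0 : R := (n.+1%:R)^-1.
have c0gt : 0 < c0 by rewrite invr_gt0 ltr0n.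
have nc0 : n%:R * c0 = 1 - c0.
  have hn : (n%:R + 1 : R) != 0 by rewrite natr1 pnatr_eq0.
  by rewrite /c0 -natr1; field.
pose mu0 : 'rV[R]_n := const_mx c0.
have smu0 : \sum_i mu0 0 i = 1 - c0.
  rewrite (eq_bigr (fun=> c0)) => [|i _]; last by rewrite mxE.
  by rewrite sumr_const card_ord -mulr_natl.
exists (lat t + mu0 *m MR).
  by apply/conv_unimodularP; exists mu0; split; rewrite ?smu0 ?gerBl ?ltW // => i; rewrite mxE ltW.
move=> p; pose mup := (p - lat t) *m invmx MR.
have pE : p = lat t + mup *m MR by rewrite /mup (mulmxKV MR_unit) addrC subrK.
clearbody mup.
pose K := 1 + \sum_i `|mup 0 i|.
have mupK i : - K <= mup 0 i.
  suff : `|mup 0 i| <= K by rewrite ler_norml => /andP[].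
  by rewrite /K (bigD1 i) //= addrCA lerDl addr_ge0 // sumr_ge0.
have sum_mupK : \sum_i mup 0 i <= K - 1.
  by rewrite /K addrC addKr; apply: ler_sum => i _; exact: ler_norm.
have Kc : 0 < K + c0 by rewrite addr_gt0 // ltr_wpDr ?sumr_ge0.
pose s := c0 / (K + c0).
have sK : s * (K + c0) = c0 by rewrite /s mulfVK // gt_eqF.
have s0 : 0 < s by rewrite divr_gt0.
have s1 : s <= 1 by rewrite ler_pdivrMr // mul1r lerDr addr_ge0 // sumr_ge0.
exists s; first by rewrite s0 s1.
apply/conv_unimodularP; exists (s *: mup + (1 - s) *: mu0); split.
- move=> i; rewrite !mxE.
  have := ler_wpM2l (ltW s0) (mupK i); move: sK; nra.
- rewrite (eq_bigr (fun i => s * mup 0 i + (1 - s) * mu0 0 i)) => [|i _]; last first.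
    by rewrite !mxE.
  rewrite big_split /= -!mulr_sumr smu0.
  have := ler_wpM2l (ltW s0) sum_mupK; move: sK; nra.
- rewrite pE mulmxDl -!scalemxAl !scalerDr addrACA -scalerDl.
  by rewrite [s + _]addrC subrK scale1r.
Qed.

Lemma unimodular_interpolation (f : 'rV[int]_n -> R) :
  exists (g : 'rV[R]_n) (beta : R), forall b, b \in sg -> dotR (lat b) g + beta = f b.
Proof.
pose d : 'cV[R]_n := \col_i (f (t + row i M) - f t).
pose g := (invmx MR *m d)^T.
have gi i : dotR (row i MR) g = f (t + row i M) - f t.
  by rewrite dotR_mx /g trmxK -row_mul mulmxA mulmxV ?mul1mx ?MR_unit // !mxE.
exists g, (f t - dotR (lat t) g) => b; rewrite sgE => /orP[/eqP ->|/existsP[j /eqP ->]].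
  by rewrite addrC subrK.
by rewrite latD lat_row dotRDl gi; ring.
Qed.

End UnimodularSimplex.
End LatticeGeometry.

Definition trop_monom (R : realType) (n : nat) (rho : 'rV[int]_n -> R)
  (a : 'rV[int]_n) (xi : 'rV[R]_n) : R := pairing a xi - rho a.

Section RegularDecomposition.
Variables (R : realType) (n : nat) (A : {fset 'rV[int]_n}) (rho : 'rV[int]_n -> R)
  (cells : seq {fset 'rV[int]_n}) (rhohat : 'rV[R]_n -> R).
Local Notation lat := (@lat R n).
Local Notation dotR := (@dotR R n).
Local Notation conv := (@conv R n).

Hypothesis rhohat_convex : convex_fun_on (conv A) rhohat.
Hypothesis rhohat_rho : forall a, a \in A -> rhohat (lat a) = rho a.
Hypothesis cellsP : forall sigma, sigma \in cells ->
  [/\ (sigma `<=` A)%fset,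
      unimodular_simplex sigma,
      affine_on (conv sigma) rhohat &
      forall D : 'rV[R]_n -> Prop,
        convex_set D ->
        (forall xi, conv sigma xi -> D xi) ->
        (forall xi, D xi -> conv A xi) ->
        affine_on D rhohat ->
        forall xi, D xi -> conv sigma xi].
Hypothesis cells_cover :
  forall xi, conv A xi <-> exists2 sigma, sigma \in cells & conv sigma xi.

Lemma conv_cell_sub sg xi : sg \in cells -> conv sg xi -> conv A xi.
Proof. by move=> sc cx; apply/cells_cover; exists sg. Qed.

Section Cell.
Variables (sg : {fset 'rV[int]_n}) (m : 'rV[R]_n) (b : R).
Hypothesis sg_cell : sg \in cells.
Hypothesis rhohat_sg : forall xi, conv sg xi -> rhohat xi = dotR m xi + b.

Lemma cell_affine_le p : conv A p -> dotR m p + b <= rhohat p.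
Proof.
move=> pA; have [_ [M [t [M_unit sgE]]] _ _] := cellsP sg_cell.
have [q0 q0sg hq0] := unimodular_internal_point R M_unit sgE.
have [s /andP[s0 s1] rsg] := hq0 p.
have s01 : 0 <= s <= 1 by rewrite (ltW s0) s1.
have := rhohat_convex pA (conv_cell_sub sg_cell q0sg) s01.
rewrite (rhohat_sg rsg) (rhohat_sg q0sg) dotRDr !dotRZr => H.
have : s * (dotR m p + b) <= s * rhohat p by lra.
by rewrite ler_pM2l.
Qed.

(* Otherwise maximality of the domain of linearity [sg] would force the convex
   set where [rhohat] is below its affine extension from [sg], which contains
   [lat a], into [sg]; but [sg] contains no lattice points besides its
   vertices. *)
Lemma cell_affine_lt a : a \in A -> a \notin sg -> dotR m (lat a) + b < rho a.
Proof.
move=> aA asg; rewrite ltNge; apply/negP => Hle.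
have [_ [M [t [M_unit sgE]]] _ sg_max] := cellsP sg_cell.
pose D q := conv A q /\ rhohat q <= dotR m q + b.
suff : conv sg (lat a) by move/(unimodular_conv_lat M_unit sgE); rewrite (negbTE asg).
apply: (sg_max D).
- move=> x y s [xA xl] [yA yl] s01; split; first exact: conv_convex.
  have := rhohat_convex xA yA s01; rewrite dotRDr !dotRZr.
  case/andP: s01 => s0 s1.
  have := ler_wpM2l s0 xl; have := ler_wpM2l (_ : 0 <= 1 - s) yl.
  by rewrite subr_ge0 => /(_ s1); lra.
- by move=> xi cx; split; [exact: conv_cell_sub sg_cell cx | rewrite rhohat_sg].
- by move=> xi [].
- exists m, b => xi [xA xl]; apply/eqP; rewrite eq_le xl.
  exact: cell_affine_le xA.
- by split; [exact: conv_lat | rewrite rhohat_rho].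
Qed.

(* The summand equals [<lat a, xi - m> - b], an affine function of [lat a]
   bounded by [mx] at the vertices of [sg], hence at the barycenter. *)
Lemma cell_barycenter_le xi mx (P : pred 'rV[int]_n) :
  (forall c, c \in sg -> trop_monom rho c xi <= mx) ->
  let k := \sum_(a <- A | P a) (1 : R) in 0 < k ->
  conv sg (k^-1 *: \sum_(a <- A | P a) lat a) ->
  \sum_(a <- A | P a) (trop_monom rho a xi + (rho a - (dotR m (lat a) + b))) <= k * mx.
Proof.
move=> trop_le k k0 psg.
have sgA : (sg `<=` A)%fset by case: (cellsP sg_cell).
have tropE a : trop_monom rho a xi + (rho a - (dotR m (lat a) + b)) =
    dotR (lat a) (xi - m) - b.
  by rewrite /trop_monom pairingE dotRBr [dotR (lat a) m]dotRC; ring.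
have p_le : dotR (k^-1 *: \sum_(a <- A | P a) lat a) (xi - m) - b <= mx.
  apply: (conv_dotR_le (beta := - b) psg) => c csg.
  rewrite -tropE -rhohat_rho ?(fsubsetP sgA) // (rhohat_sg (conv_lat _ csg)).
  by rewrite subrr addr0 trop_le.
have -> : \sum_(a <- A | P a) (trop_monom rho a xi + (rho a - (dotR m (lat a) + b))) =
    k * (dotR (k^-1 *: \sum_(a <- A | P a) lat a) (xi - m) - b).
  rewrite dotRZl dotR_suml mulrBr mulrA mulfV ?gt_eqF // mul1r /k mulr_suml -sumrB.
  by apply: eq_bigr => a _; rewrite mul1r tropE.
by apply: ler_wpM2l p_le; exact: ltW.
Qed.

End Cell.

Lemma cell_affine_gap : exists2 eps, 0 < eps & forall sg, sg \in cells ->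
  exists m b, (forall xi, conv sg xi -> rhohat xi = dotR m xi + b) /\
    forall a, a \in A -> a \notin sg -> dotR m (lat a) + b + eps <= rho a.
Proof.
apply: uniform_pos_seq.
  move=> sg e e' [m [b [h1 h2]]] /andP[_ ee]; exists m, b; split => // a aA asg.
  by apply: le_trans (h2 a aA asg); rewrite lerD2l.
move=> sg sc; have [_ _ [m [b hrep]] _] := cellsP sc.
have [e e0 He] : exists2 e, 0 < e & forall a, a \in (A : seq _) -> a \notin sg ->
    dotR m (lat a) + b + e <= rho a.
  apply: uniform_pos_seq.
    by move=> a e e' h /andP[_ ee] asg; apply: le_trans (h asg); rewrite lerD2l.
  move=> a aA; case: (boolP (a \in sg)) => asg; first by exists 1.
  exists (rho a - (dotR m (lat a) + b)).
    by rewrite subr_gt0 (cell_affine_lt sc hrep).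
  by move=> _; rewrite addrC subrK.
by exists e => //; exists m, b; split.
Qed.

(* Take for [sg] a cell containing the barycenter of the points within [delta]
   of the maximum: by [cell_barycenter_le] their (nonnegative) excesses over
   the affine extension of [rhohat] from [sg] sum to at most [#|A| * delta],
   which is less than the excess [eps] of any point off [sg]. *)
Lemma near_max_in_cell : exists2 delta, 0 < delta &
  forall xi ast, ast \in A ->
  (forall a, a \in A -> trop_monom rho a xi <= trop_monom rho ast xi) ->
  exists2 sg, sg \in cells & forall a, a \in A -> a \notin sg ->
     trop_monom rho a xi + delta <= trop_monom rho ast xi.
Proof.
have [eps eps0 Heps] := cell_affine_gap.
pose N : R := \sum_(a <- A) 1.
have N0 : 0 <= N by apply: sumr_ge0.
have N1 : 0 < N + 1 by rewrite ltr_wpDl.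
exists (eps / (N + 1)); first by rewrite divr_gt0.
set delta := eps / (N + 1); have d0 : 0 < delta by rewrite divr_gt0.
move=> xi ast astA astmax; set mx := trop_monom rho ast xi.
pose P a := mx - delta < trop_monom rho a xi.
pose k := \sum_(a <- A | P a) (1 : R).
have k0 : 0 < k.
  rewrite /k (big_rem ast) //= /P ifT; last by rewrite ltrBlDr ltrDl.
  by rewrite ltr_wpDr ?ltr01 ?sumr_ge0.
have kN : k <= N.
  by rewrite /k /N big_mkcond /=; apply: ler_sum => a _; case: ifP.
have [sg sc psg] := (cells_cover _).1 (conv_barycenter k0).
have [m [b [hrep hgap]]] := Heps sg sc.
have sgA : (sg `<=` A)%fset by case: (cellsP sc).
pose excess a := rho a - (dotR m (lat a) + b).
have excess_ge0 a : a \in A -> 0 <= excess a.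
  move=> aA; rewrite subr_ge0 -rhohat_rho //.
  by apply: (cell_affine_le sc hrep); exact: conv_lat.
have sum_le : \sum_(a <- A | P a) trop_monom rho a xi + \sum_(a <- A | P a) excess a
    <= k * mx.
  rewrite -big_split; apply: (cell_barycenter_le sc hrep _ k0 psg) => c csg.
  exact/astmax/(fsubsetP sgA).
exists sg => // a0 a0A a0sg; rewrite leNgt; apply/negP => Pa0.
have trop_lb : k * (mx - delta) <= \sum_(a <- A | P a) trop_monom rho a xi.
  by rewrite /k mulr_suml; apply: ler_sum => a Pa; rewrite mul1r ltW.
have excess_lb : eps <= \sum_(a <- A | P a) excess a.
  rewrite (big_rem a0) //= ifT; last by rewrite /P ltrBlDr.
  have := hgap a0 a0A a0sg; rewrite -lerBrDl => ha0.
  rewrite -[eps]addr0 lerD // big_seq_cond sumr_ge0 // => a /andP[arem _].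
  exact/excess_ge0/(mem_rem arem).
have hdelta : delta * (N + 1) = eps by rewrite /delta mulfVK ?gt_eqF.
have := ler_wpM2r (ltW d0) kN.
move: sum_le trop_lb excess_lb hdelta; lra.
Qed.

End RegularDecomposition.


Section ComplexModulus.
Variable R : rcfType.

Lemma normc_ge0 (z : R[i]) : 0 <= normc z.
Proof. by case: z => a b; rewrite /normc sqrtr_ge0. Qed.

Lemma normc_gt0 (z : R[i]) : z != 0 -> 0 < normc z.
Proof. by move=> z0; rewrite lt_def normc_ge0 andbT; apply: contra z0 => /eqP/eq0_normc ->. Qed.

Lemma normc_real (r : R) : normc (r%:C)%C = `|r|.
Proof. by rewrite /normc /= expr0n /= addr0 sqrtr_sqr. Qed.

Lemma normcXz (z : R[i]) (k : int) : normc (z ^ k) = normc z ^ k.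
Proof.
have normcXn m : normc (z ^+ m) = normc z ^+ m.
  by elim: m => [|m IH]; rewrite ?expr0 ?normc1 // !exprS normcM IH.
by case: k => k; rewrite ?normcV normcXn.
Qed.

Lemma normc_prod (I : Type) (s : seq I) (F : I -> R[i]) :
  normc (\prod_(i <- s) F i) = \prod_(i <- s) normc (F i).
Proof. by elim/big_rec2: _ => [|i y1 y2 _ <-]; rewrite ?normc1 ?normcM. Qed.

Lemma normc_sum (I : Type) (s : seq I) (P : pred I) (F : I -> R[i]) :
  normc (\sum_(i <- s | P i) F i) <= \sum_(i <- s | P i) normc (F i).
Proof.
elim/big_rec2: _ => [|i y1 y2 _ IH]; first by rewrite normc0.
by apply: le_trans (le_normcD _ _) _; rewrite lerD2l.
Qed.

End ComplexModulus.

Section RealPowers.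
Variable R : realType.

Lemma powR_small (d th : R) : 0 < d -> 0 < th ->
  exists2 t0, 0 < t0 & forall tau, 0 < tau < t0 -> tau < 1 /\ powR tau d < th.
Proof.
move=> d0 th0; exists (Num.min 1 (expR (ln th / d))); first by rewrite lt_min ltr01 expR_gt0.
move=> tau /andP[tau0]; rewrite lt_min => /andP[tau1 tau_th]; split => //.
have : ln tau < ln th / d by rewrite -[X in _ < X]expRK ltr_ln // posrE expR_gt0.
rewrite ltr_pdivlMr // /powR gt_eqF // => h.
by rewrite -[th]lnK ?posrE // ltr_expR mulrC.
Qed.

Lemma expR_absln_shift (tau v d : R) : 0 < tau < 1 ->
  expR (`|ln tau| * (v - d)) = expR (`|ln tau| * v) * powR tau d.
Proof.
case/andP=> tau0 tau1; rewrite /powR gt_eqF // -expRD ltr0_norm ?ln_lt0 ?tau0 //.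
by congr expR; ring.
Qed.

Lemma normalized_constant_term (c0 : R[i]) (r : R) :
  (forall tau : R, 0 < tau -> c0 * ((powR tau r)%:C)%C = 1) -> c0 = 1 /\ r = 0.
Proof.
move=> norm; have c01 : c0 = 1 by have := norm 1 ltr01; rewrite powR1 mulr1.
split => //; have := norm (expR 1) (expR_gt0 _).
rewrite c01 mul1r /powR gt_eqF ?expR_gt0 // expRK mulr1.
by move/(congr1 (@complex.Re R)) => /= /(congr1 (@ln R)); rewrite expRK ln1.
Qed.

End RealPowers.

Definition laurent_term (R : realType) (n : nat) (c : 'rV[int]_n -> R[i])
    (rho : 'rV[int]_n -> R) (tau : R) (x : 'rV[R[i]]_n) (a : 'rV[int]_n) : R[i] :=
  c a * ((powR tau (rho a))%:C)%C * monom a x.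

Section LaurentTerms.
Variables (R : realType) (n : nat) (c : 'rV[int]_n -> R[i]) (rho : 'rV[int]_n -> R).
Variables (tau : R) (x : 'rV[R[i]]_n).
Hypothesis x_neq0 : forall j, x ord0 j != 0.
Local Notation term := (laurent_term c rho tau x).

Lemma normc_monom a : ln tau != 0 ->
  normc (monom a x) = expR (`|ln tau| * pairing a (Logmap tau x)).
Proof.
move=> ln_neq0; rewrite /monom normc_prod /pairing mulr_sumr expR_sum.
apply: eq_bigr => j _; rewrite normcXz -powR_intmul ?normc_ge0 // /powR.
rewrite gt_eqF ?normc_gt0 // /Logmap mxE; congr expR.
by field; rewrite normr_eq0.
Qed.

Lemma normc_laurent_term a : 0 < tau < 1 ->
  normc (term a) = normc (c a) * expR (`|ln tau| * trop_monom rho a (Logmap tau x)).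
Proof.
case/andP=> tau0 tau1; have ln_lt0 : ln tau < 0 by rewrite ln_lt0 ?tau0.
rewrite /laurent_term !normcM normc_real normc_monom ?lt_eqF // -mulrA.
rewrite ger0_norm ?powR_ge0 // /powR gt_eqF // -expRD /trop_monom ltr0_norm //.
by congr (_ * expR _); ring.
Qed.

(* Euler's identity [x_j * df/dx_j = sum_a a_j * term a], combined along [g]. *)
Lemma critical_euler_relation (A : {fset 'rV[int]_n}) :
  critical_point A c rho tau x ->
  forall g : 'rV[R]_n, \sum_(a <- A) term a * ((dotR (lat R a) g)%:C)%C = 0.
Proof.
case=> _ crit g.
have euler j : \sum_(a <- A) term a * (a ord0 j)%:~R = laurent_partial A c rho tau j x * x ord0 j.
  rewrite mulr_suml; apply: eq_bigr => a _.
  rewrite /laurent_term /monom -!mulrA; congr (_ * (_ * _)).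
  rewrite [RHS]mulrC; congr (_ * _).
  rewrite (bigD1 j) //= [in RHS](bigD1 j) //= eqxx mulrAC.
  rewrite expfzDr ?x_neq0 // exprN1 mulfVK ?x_neq0 //.
  by congr (_ * _); apply: eq_bigr => k /negbTE kj; rewrite kj subr0.
rewrite (eq_bigr (fun a => \sum_(j < n) term a * (a ord0 j)%:~R * (g ord0 j)%:C%C)).
  by rewrite exchange_big /= big1 // => j _; rewrite -mulr_suml euler crit !mul0r.
move=> a _; rewrite /Defs.dotR rmorph_sum mulr_sumr; apply: eq_bigr => j _.
by rewrite rmorphM /= mxE rmorph_int mulrA.
Qed.

End LaurentTerms.

Section EulerBound.
Variables (R : realType) (n : nat) (A : {fset 'rV[int]_n}).
Local Notation lat := (@lat R n).
Local Notation dotR := (@dotR R n).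

(* As [<., g>] is the indicator of [b0] on [sg], the relation expresses [w b0]
   through the [w a] with [a] off [sg]. *)
Lemma euler_dual_bound (sg : {fset 'rV[int]_n}) (w : 'rV[int]_n -> R[i]) g b0 E :
  0 <= E -> (sg `<=` A)%fset -> b0 \in sg ->
  (forall b, b \in sg -> dotR (lat b) g = (b == b0)%:R) ->
  \sum_(a <- A) w a * ((dotR (lat a) g)%:C)%C = 0 ->
  (forall a, a \in A -> a \notin sg -> normc (w a) <= E) ->
  normc (w b0) <= E * \sum_(a <- A) `|dotR (lat a) g|.
Proof.
move=> E0 sgA b0sg g_dual rel w_le.
have b0A : b0 \in A := fsubsetP sgA b0 b0sg.
have in_sg : \sum_(a <- A | a \in sg) w a * ((dotR (lat a) g)%:C)%C = w b0.
  rewrite (big_rem b0) //= b0sg g_dual // eqxx rmorph1 mulr1 big1_seq ?addr0 //.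
  move=> a /andP[asg]; rewrite mem_rem_uniq ?fset_uniq // => /andP[/= ab _].
  by rewrite g_dual // (negbTE ab) rmorph0 mulr0.
have -> : w b0 = - \sum_(a <- A | a \notin sg) w a * ((dotR (lat a) g)%:C)%C.
  by move: rel; rewrite (bigID (mem sg)) /= in_sg => /eqP; rewrite addr_eq0 => /eqP.
rewrite normcN; apply: le_trans (normc_sum _ _ _) _.
rewrite mulr_sumr [X in _ <= X](bigID (fun a => a \notin sg)) /= -[X in X <= _]addr0.
apply: lerD.
  rewrite big_seq_cond [X in _ <= X]big_seq_cond; apply: ler_sum => a /andP[aA asg].
  by rewrite normcM normc_real; apply: ler_wpM2r => //; exact: w_le.
by apply: sumr_ge0 => a _; rewrite mulr_ge0.
Qed.

Lemma euler_relation_bound (cells : seq {fset 'rV[int]_n}) :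
  (forall sg, sg \in cells -> [/\ (sg `<=` A)%fset, unimodular_simplex sg & 0 \in sg]) ->
  exists2 K, 0 <= K & forall sg, sg \in cells ->
    forall w : 'rV[int]_n -> R[i],
    (forall g, \sum_(a <- A) w a * ((dotR (lat a) g)%:C)%C = 0) ->
    forall E, 0 <= E -> (forall a, a \in A -> a \notin sg -> normc (w a) <= E) ->
    forall b0, b0 \in sg -> b0 != 0 -> normc (w b0) <= K * E.
Proof.
move=> cellsP.
pose dual_bounded (sg : {fset 'rV[int]_n}) b0 (K : R) := exists g,
  (forall b, b \in sg -> dotR (lat b) g = (b == b0)%:R) /\
  \sum_(a <- A) `|dotR (lat a) g| <= K.
have dual_bounded_le sg b0 (K K' : R) :
    dual_bounded sg b0 K -> K <= K' -> dual_bounded sg b0 K'.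
  by move=> [g [g_dual gK]] KK'; exists g; split => //; apply: le_trans KK'.
have [K HK] : exists K, forall sg, sg \in cells ->
    forall b0, b0 \in sg -> b0 != 0 -> dual_bounded sg b0 K.
  apply: (uniform_ub_seq (P := fun (sg : {fset 'rV[int]_n}) (K : R) =>
    forall b0, b0 \in sg -> b0 != 0 -> dual_bounded sg b0 K)).
    by move=> sg K K' h KK' b0 b0sg b00; apply: dual_bounded_le (h b0 b0sg b00) KK'.
  move=> sg sc; have [_ [M [t [M_unit sgE]]] sg0] := cellsP sg sc.
  apply: (uniform_ub_seq (P := fun b0 (K : R) => b0 != 0 -> dual_bounded sg b0 K)).
    by move=> b0 K K' h KK' b00; apply: dual_bounded_le (h b00) KK'.
  move=> b0 b0sg.
  have [g [beta Hg]] := unimodular_interpolation M_unit sgE (fun b => (b == b0)%:R : R).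
  exists (\sum_(a <- A) `|dotR (lat a) g|) => b00; exists g; split => //.
  have beta0 : beta = 0 by have := Hg 0 sg0; rewrite lat0 dotR0l add0r eq_sym (negbTE b00).
  by move=> b bsg; rewrite -(Hg b bsg) beta0 addr0.
exists (Num.max K 0); first by rewrite le_max lexx orbT.
move=> sg sc w rel E E0 w_le b0 b0sg b00.
have [g [g_dual gK]] := HK sg sc b0 b0sg b00.
have [sgA _ _] := cellsP sg sc.
apply: le_trans (euler_dual_bound E0 sgA b0sg g_dual (rel g) w_le) _.
by rewrite mulrC ler_wpM2r // le_max gK.
Qed.

End EulerBound.

Section CriticalPoints.
Variables (R : realType) (n : nat) (A : {fset 'rV[int]_n}) (c : 'rV[int]_n -> R[i])
  (rho : 'rV[int]_n -> R) (cells : seq {fset 'rV[int]_n}).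
Hypothesis c_neq0 : forall a, a \in A -> c a != 0.
Hypothesis decomp : unimodular_regular_decomposition A rho cells.
Hypothesis cells_0 : forall sg, sg \in cells -> 0 \in sg.
Local Notation term tau x := (laurent_term c rho tau x).
Local Notation trop a xi := (trop_monom rho a xi).

Lemma critical_term_bound : exists2 delta, 0 < delta & exists2 C, 0 <= C &
  forall tau, 0 < tau < 1 -> forall x, critical_point A c rho tau x ->
  forall ast, ast \in A ->
  (forall a, a \in A -> trop a (Logmap tau x) <= trop ast (Logmap tau x)) ->
  forall a, a \in A -> a != 0 ->
  normc (term tau x a) <= C * powR tau delta * expR (`|ln tau| * trop ast (Logmap tau x)).
Proof.
case: decomp => rhohat [rhohat_convex rhohat_rho cellsP cells_cover _].
have [delta d0 near_max] := near_max_in_cell rhohat_convex rhohat_rho cellsP cells_cover.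
have cells_unimodular sg : sg \in cells ->
    [/\ (sg `<=` A)%fset, unimodular_simplex sg & 0 \in sg].
  by move=> sc; have [? ? _ _] := cellsP sg sc; split => //; exact: cells_0.
have [K K0 euler_bound] := euler_relation_bound R cells_unimodular.
pose cmax := \sum_(a <- A) normc (c a).
have cmax0 : 0 <= cmax by apply: sumr_ge0 => a _; exact: normc_ge0.
have c_le a : a \in A -> normc (c a) <= cmax.
  by move=> aA; rewrite /cmax (big_rem a) //= lerDl sumr_ge0 // => b _; exact: normc_ge0.
exists delta => //; exists ((K + 1) * cmax); first by rewrite mulr_ge0 // addr_ge0.
move=> tau tau01 x crit ast astA ast_max a aA a_neq0.
have x_neq0 := crit.1; set xi := Logmap tau x.
pose E := cmax * expR (`|ln tau| * (trop ast xi - delta)).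
have E0 : 0 <= E by rewrite mulr_ge0 ?expR_ge0.
have -> : (K + 1) * cmax * powR tau delta * expR (`|ln tau| * trop ast xi) = (K + 1) * E.
  by rewrite /E (expR_absln_shift (trop ast xi) delta tau01); ring.
have E_le : E <= (K + 1) * E by rewrite mulrDl mul1r lerDr mulr_ge0.
have [sg sc off_sg] := near_max xi ast astA ast_max.
have term_off b : b \in A -> b \notin sg -> normc (term tau x b) <= E.
  move=> bA bsg; rewrite normc_laurent_term //.
  apply: ler_pM; rewrite ?normc_ge0 ?expR_ge0 ?c_le //.
  by rewrite ler_expR ler_wpM2l // lerBrDr off_sg.
case: (boolP (a \in sg)) => asg; last exact: le_trans (term_off a aA asg) E_le.
have rel := critical_euler_relation x_neq0 crit.
apply: le_trans (euler_bound sg sc _ rel E E0 term_off a asg a_neq0) _.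
by rewrite ler_wpM2r // lerDl.
Qed.

Lemma critical_in_U0 : exists2 tau0 : R, 0 < tau0 &
  forall tau, 0 < tau < tau0 -> forall x, critical_point A c rho tau x -> in_U0 A rho tau x.
Proof.
have [delta d0 [C C0 term_bound]] := critical_term_bound.
have [cmin cmin0 c_ge] : exists2 cmin, 0 < cmin &
    forall a, a \in (A : seq _) -> cmin <= normc (c a).
  apply: uniform_pos_seq => [a e e' h /andP[_ /le_trans]|a aA]; first exact.
  by exists (normc (c a)); rewrite ?normc_gt0 ?c_neq0.
pose th := cmin / (C + 1).
have th0 : 0 < th by rewrite divr_gt0 // ltr_wpDl.
have Cth : C * th = cmin - th by rewrite /th; field; rewrite gt_eqF // ltr_wpDl.
have [tau0 tau00 small] := powR_small d0 th0.
exists tau0 => // tau tau_range x crit.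
have [tau1 pow_small] := small tau tau_range.
have tau01 : 0 < tau < 1 by case/andP: tau_range => -> _.
have x_neq0 := crit.1; split => //; set xi := Logmap tau x.
move=> a1 a1A a1_neq0; change (trop a1 xi < trop 0 xi).
rewrite ltNge; apply/negP => a1_max.
have a1_nz : a1 \in [seq a <- A | a != 0] by rewrite mem_filter a1_neq0 a1A.
have [ast] := exists_argmax_seq (fun a => trop a xi) a1_nz.
rewrite mem_filter => /andP[ast_neq0 astA] ast_max.
have ast_gmax b : b \in A -> trop b xi <= trop ast xi.
  move=> bA; case: (eqVneq b 0) => [->|b_neq0].
    by apply: le_trans a1_max _; exact: ast_max.
  by apply: ast_max; rewrite mem_filter b_neq0.
have := term_bound tau tau01 x crit ast astA ast_gmax ast astA ast_neq0.
rewrite normc_laurent_term // ler_pM2r ?expR_gt0 // => c_ast.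
have := ler_wpM2l C0 (ltW pow_small); have := c_ge ast astA; lra.
Qed.

Lemma critical_value_near_1 : 0 \in A -> c 0 = 1 -> rho 0 = 0 ->
  forall eps : R, 0 < eps -> exists2 delta : R, 0 < delta &
    forall tau : R, 0 < tau < delta -> forall x, critical_point A c rho tau x ->
      normc (laurent A c rho tau x - 1) < eps.
Proof.
move=> A0 c01 rho00 eps eps0.
have [tau0 tau00 in_U0] := critical_in_U0.
have [delta d0 [C C0 term_bound]] := critical_term_bound.
pose D := \sum_(a <- rem 0 A) C.
have D0 : 0 <= D by exact: sumr_ge0.
pose th := eps / (D + 1).
have th0 : 0 < th by rewrite divr_gt0 // ltr_wpDl.
have Dth : D * th = eps - th by rewrite /th; field; rewrite gt_eqF // ltr_wpDl.
have [tau1 tau10 small] := powR_small d0 th0.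
exists (Num.min tau0 tau1) => [|tau]; first by rewrite lt_min tau00.
case/andP=> tau_gt0; rewrite lt_min => /andP[lt_tau0 lt_tau1] x crit.
have [tau_lt1 pow_small] := small tau (ltac:(by rewrite tau_gt0)).
have tau01 : 0 < tau < 1 by rewrite tau_gt0.
set xi := Logmap tau x.
have trop0 : trop 0 xi = 0.
  by rewrite /trop_monom /pairing big1 ?rho00 ?subr0 // => j _; rewrite mxE mul0r.
have zero_max a : a \in A -> trop a xi <= trop 0 xi.
  move=> aA; case: (eqVneq a 0) => [-> //|a_neq0]; apply: ltW.
  exact: (in_U0 tau (ltac:(by rewrite tau_gt0)) x crit).2 a aA a_neq0.
have term0 : term tau x 0 = 1.
  by rewrite /laurent_term c01 rho00 powRr0 !mul1r /monom big1 // => j _; rewrite mxE expr0z.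
have -> : laurent A c rho tau x = \sum_(a <- A) term tau x a by [].
rewrite (big_rem 0) //= term0 addrC addrK.
apply: le_lt_trans (normc_sum _ _ _) _.
apply: (@le_lt_trans _ _ (D * powR tau delta)).
  rewrite /D mulr_suml big_seq [X in _ <= X]big_seq; apply: ler_sum => a arem.
  have a_neq0 : a != 0 by move: arem; rewrite mem_rem_uniq ?fset_uniq // => /andP[].
  have := term_bound tau tau01 x crit 0 A0 zero_max a (mem_rem arem) a_neq0.
  by rewrite trop0 mulr0 expR0 mulr1.
have := ler_wpM2l D0 (ltW pow_small); lra.
Qed.

End CriticalPoints.

Theorem lemma5p2 (R : realType) (n : nat) (A : {fset 'rV[int]_n})
    (c : 'rV[int]_n -> R[i]) (rho : 'rV[int]_n -> R)
    (cells : seq {fset 'rV[int]_n}) :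
  0 \in A ->
  (forall a, a \in A -> c a != 0) ->
  unimodular_regular_decomposition A rho cells ->
  (forall tau : R, 0 < tau -> c 0 * ((powR tau (rho 0))%:C)%C = 1) ->
  (forall sigma, sigma \in cells -> 0 \in sigma) ->
  (exists2 tau0 : R, 0 < tau0 &
     forall tau : R, 0 < tau < tau0 ->
       forall x, critical_point A c rho tau x -> in_U0 A rho tau x) /\
  (forall eps : R, 0 < eps -> exists2 delta : R, 0 < delta &
     forall tau : R, 0 < tau < delta ->
       forall x, critical_point A c rho tau x ->
         Normc.normc (laurent A c rho tau x - 1) < eps).
Proof.
move=> A0 c_neq0 decomp norm cells_0.
have [c01 rho00] := normalized_constant_term norm.
split; first exact: critical_in_U0 c_neq0 decomp cells_0.
exact: critical_value_near_1 c_neq0 decomp cells_0 A0 c01 rho00.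
Qed.
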